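(* Let $x_0<x_1<\cdots<x_6$ be real numbers and write $d_{i,j}=x_j-x_i$ for $i<j$. If $d_{0,1}d_{2,3}d_{3,4}d_{5,6}>d_{1,2}d_{4,5}d_{0,3}d_{3,6}$, then at least one of the following holds: (1) $d_{1,2}<\min\{d_{0,1},d_{2,3}\}$; (2) $d_{4,5}<\min\{d_{3,4},d_{5,6}\}$. *)

From Stdlib Require Import Reals.
Open Scope R_scope.

(* If neither alternative holds, each triple of consecutive gaps a, b, c
   (namely d01, d12, d23 and d34, d45, d56) has b >= min(a, c), hence
   a c <= b (a + b + c).  Multiplying the two estimates gives
   d01 d23 d34 d56 <= d12 d45 d03 d36, contradicting the hypothesis. *)

From Stdlib Require Import Reals Lra Psatz.
Open Scope R_scope.

Lemma outer_prod_le_middle_mul_sum (a b c : R) :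
  0 <= a -> 0 <= c -> Rmin a c <= b -> a * c <= b * (a + b + c).
Proof.
  intros Ha Hc Hb.
  assert (Hb0 : 0 <= b) by (apply Rle_trans with (Rmin a c); [apply Rmin_glb|]; lra).
  destruct (Rle_dec a c) as [Hac | Hca].
  - rewrite Rmin_left in Hb by lra; nra.
  - rewrite Rmin_right in Hb by lra; nra.
Qed.

Lemma outer_gaps_mul_le (u v w z : R) :
  u <= v -> v <= w -> w <= z -> Rmin (v - u) (z - w) <= w - v ->
  (v - u) * (z - w) <= (w - v) * (z - u).
Proof.
  intros Huv Hvw Hwz Hmin.
  replace (z - u) with ((v - u) + (w - v) + (z - w)) by ring.
  apply outer_prod_le_middle_mul_sum; lra.
Qed.

Theorem lemma3 (x0 x1 x2 x3 x4 x5 x6 : R) :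
  x0 < x1 -> x1 < x2 -> x2 < x3 -> x3 < x4 -> x4 < x5 -> x5 < x6 ->
  (x1 - x0) * (x3 - x2) * (x4 - x3) * (x6 - x5) >
    (x2 - x1) * (x5 - x4) * (x3 - x0) * (x6 - x3) ->
  (x2 - x1 < Rmin (x1 - x0) (x3 - x2)) \/
  (x5 - x4 < Rmin (x4 - x3) (x6 - x5)).
Proof.
  intros H01 H12 H23 H34 H45 H56 Hprod.
  destruct (Rlt_or_le (x2 - x1) (Rmin (x1 - x0) (x3 - x2))) as [Hl | Hl];
    [now left |].
  destruct (Rlt_or_le (x5 - x4) (Rmin (x4 - x3) (x6 - x5))) as [Hr | Hr];
    [now right |].
  exfalso.
  assert (Hleft : (x1 - x0) * (x3 - x2) <= (x2 - x1) * (x3 - x0))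
    by (apply outer_gaps_mul_le; lra).
  assert (Hright : (x4 - x3) * (x6 - x5) <= (x5 - x4) * (x6 - x3))
    by (apply outer_gaps_mul_le; lra).
  assert (Hboth : (x1 - x0) * (x3 - x2) * ((x4 - x3) * (x6 - x5))
                  <= (x2 - x1) * (x3 - x0) * ((x5 - x4) * (x6 - x3))).
  { apply Rmult_le_compat; try assumption; apply Rmult_le_pos; lra. }
  nra.
Qed.
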